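(* Let $J$ be a finite set, $F:\{0,1\}^{1+J}\to\mathbb{Q}_{\ge0}$ and $G:\{0,1\}^J\to\mathbb{Q}_{\ge0}$ be strictly terraced, and define $H(t)=\sum_{x\in\{0,1\}^J}F(t;x)G(x)$ for $t\in\{0,1\}$. If $H(1)>0$ then $H(0)\le(\mathrm{Prat}(F)+\mathrm{Prat}(G))H(1)$.
   Context: $1+J$ denotes the disjoint union of $\{1\}$ and $J$; elements of $\{0,1\}^{1+J}$ are written $(t;x)$. $e_i$ is the characteristic vector of $\{i\}$ and $\oplus$ is coordinatewise addition mod 2. A signature $F:\{0,1\}^I\to\mathbb{Q}_{\ge0}$ is strictly terraced if for all $x$ and $i,j\in I$, $F(x)=0$ implies $F(x\oplus e_i)=F(x\oplus e_j)$. Parity relations: $\mathrm{Even}_K(x)=1$ iff $\sum_ix_i$ even, $\mathrm{Odd}_K(x)=1$ iff $\sum_ix_i$ odd (else $0$), and their copies. A circuit $\phi$: finite set $J$ of incidences, vertices $V$ with sets $J_v$ partitioning $J$, external edges $A\subseteq J$, a partition $E$ of $J\setminus A$ into pairs, constraints $F_v:\{0,1\}^{J_v}\to\mathbb{Q}_{\ge0}$; assignments are $x$ with $x_i=x_j$ for $\{i,j\}\in E$; $[\![\phi]\!](x)=\sum_{x'}\prod_vF_v(x'|_{J_v})$ over assignments $x'$ extending $x\in\{0,1\}^A$. A copy of $F:\{0,1\}^I\to\mathbb{Q}_{\ge0}$ is $x\mapsto F(x\circ\pi)$ for a bijection $\pi$. For $F$ not identically zero, a parity-signature of $F$ is a positive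 constant multiple of $[\![\phi]\!]$ for a circuit $\phi$ with exactly one constraint a copy of $F$ and all other constraints copies of parity relations. $\mathrm{Prat}(F)=\max\{F'(0)/F'(1)\}$ over parity-signatures $F':\{0,1\}\to\mathbb{Q}_{\ge0}$ of $F$ with $F'(1)>0$; $\mathrm{Prat}(F)=0$ if $F$ is identically zero. *)

From HB Require Import structures.
From mathcomp Require Import all_boot all_order all_algebra.
Set Implicit Arguments. Unset Strict Implicit. Unset Printing Implicit Defensive.
Import Order.TTheory GRing.Theory Num.Theory.
Local Open Scope ring_scope.

Definition signature (I : finType) := {ffun I -> bool} -> rat.

Definition flip (I : finType) (x : {ffun I -> bool}) (i : I) : {ffun I -> bool} :=
  [ffun k => if k == i then ~~ x k else x k].

Definition strictly_terraced (I : finType) (F : signature I) : Prop :=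
  forall (x : {ffun I -> bool}) (i j : I), F x = 0 -> F (flip x i) = F (flip x j).

Definition Even (K : finType) : signature K :=
  fun x => if ~~ odd (\sum_(k : K) (x k : nat))%N then 1 else 0.
Definition Odd (K : finType) : signature K :=
  fun x => if odd (\sum_(k : K) (x k : nat))%N then 1 else 0.

Definition is_copy (I K : finType) (F : signature I) (H : signature K) : Prop :=
  exists pi : I -> K, bijective pi /\ forall x, H x = F [ffun i => x (pi i)].

(* Circuits.  inc = J (incidences), vtx = V, vof j = the vertex v with j in J_v,
   ext = A, and the partition E of J \ A into pairs is given by a fixed-point-free
   involution [mate] on J \ A (its values on A are irrelevant). *)
Record circuit := Circuit {
  inc : finType;
  vtx : finType;
  vof : inc -> vtx;
  ext : {set inc};
  mate : inc -> inc;
  mate_out : forall j, j \notin ext -> mate j \notin ext;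
  mate_neq : forall j, j \notin ext -> mate j != j;
  mate_inv : forall j, j \notin ext -> mate (mate j) = j;
  cons : forall v : vtx, signature {j : inc | vof j == v}
}.

Definition restr (phi : circuit) (x : {ffun inc phi -> bool}) (v : vtx phi)
  : {ffun {j : inc phi | vof j == v} -> bool} := [ffun j => x (val j)].

Definition ext_t (phi : circuit) := {j : inc phi | j \in ext phi}.

Definition eval (phi : circuit) (x : {ffun ext_t phi -> bool}) : rat :=
  \sum_(x' : {ffun inc phi -> bool} |
          [forall a : ext_t phi, x' (val a) == x a] &&
          [forall j, (j \notin ext phi) ==> (x' j == x' (@mate phi j))])
    \prod_(v : vtx phi) @cons phi v (restr x' v).

Definition is_parity_copy (K : finType) (H : signature K) : Prop :=
  exists L : finType, is_copy (@Even L) H \/ is_copy (@Odd L) H.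

Definition nonzero_sig (I : finType) (F : signature I) : Prop :=
  exists x, F x != 0.

Definition parity_signature (I K : finType) (F : signature I) (G : signature K) : Prop :=
  nonzero_sig F /\
  exists (phi : circuit) (c : rat) (beta : K -> ext_t phi),
    0 < c /\ bijective beta /\
    (forall x : {ffun ext_t phi -> bool}, G [ffun k => x (beta k)] = c * @eval phi x) /\
    exists v0 : vtx phi, is_copy F (@cons phi v0) /\
      forall v : vtx phi, v != v0 -> is_parity_copy (@cons phi v).

Definition ffb (b : bool) : {ffun unit -> bool} := [ffun _ => b].

Definition IsPrat (I : finType) (F : signature I) (p : rat) : Prop :=
  ((forall x, F x = 0) /\ p = 0) \/
  (nonzero_sig F /\
   (exists G : signature unit,
       parity_signature F G /\ 0 < G (ffb true) /\ p = G (ffb false) / G (ffb true)) /\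
   (forall G : signature unit,
       parity_signature F G -> 0 < G (ffb true) -> G (ffb false) / G (ffb true) <= p)).

(* (t; x) in {0,1}^{1+J}, with 1+J encoded as unit + J *)
Definition tcons (J : finType) (t : bool) (x : {ffun J -> bool}) : {ffun (unit + J)%type -> bool} :=
  [ffun k => match k with inl _ => t | inr j => x j end].

From HB Require Import structures.
From mathcomp Require Import all_boot all_order all_algebra.
From mathcomp Require Import ring.
Set Implicit Arguments. Unset Strict Implicit. Unset Printing Implicit Defensive.
Import Order.TTheory GRing.Theory Num.Theory.
Local Open Scope ring_scope.

(* 1. A parity gadget: wiring a copy of a signature Phi to parity relations
      that pin some inputs and fix the parities of two classes of the others
      (the external edge entering one class) yields a unary parity-signature
      Psi of Phi, hence Psi(0) <= Prat(Phi) Psi(1) (prat_gadget_bound).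
      Instantiated on faces of the cube {0,1}^J this bounds sums of F(0;.)
      against F(1;.), and of G against G, over parity classes of a face.
   2. The claim is proved for every face of the cube by induction on its
      number of free coordinates (face_claim_all).  Splitting a face along a
      free coordinate j, the claim follows from the claims for the two halves
      unless one half has no weight at t = 1 but positive weight at t = 0.
      In that degenerate case strict terracedness of F and G propagates along
      the edges of the cube and forces a rigid shape on the face (G constant
      on one parity class, F(1;.) constant on the other), from which the
      inequality follows by one F-gadget bound and one G-gadget bound
      (degenerate_bound). *)

Lemma sum_over_sig (T : finType) (P : pred T) (f : T -> nat) :
  (\sum_(k : {j | P j}) f (val k) = \sum_(j | P j) f j)%N.
Proof.
rewrite [RHS](reindex_omap (val : {j | P j} -> T) insub); last first.
  by move=> i Pi; rewrite insubT.
by apply: eq_bigl => -[i Pi] /=; rewrite insubT /= Pi eqxx.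
Qed.

Lemma prod_indicator (T : finType) (b : pred T) :
  \prod_(i : T) (if b i then 1 else 0 : rat) = if [forall i, b i] then 1 else 0.
Proof.
case: forallP => [Hb|/forallP/forallPn [i Hi]].
  by rewrite big1 // => i _; rewrite Hb.
by rewrite (bigD1 i) //= (negbTE Hi) mul0r.
Qed.

Lemma pos_sum_witness (T : finType) (P : pred T) (f : T -> rat) :
  0 < \sum_(i | P i) f i -> exists i, P i && (f i != 0).
Proof.
case: (pickP (fun i => P i && (f i != 0))) => [i Hi _|H]; first by exists i.
by rewrite big1 ?ltxx // => i Pi; have := H i; rewrite Pi /= => /negbFE/eqP.
Qed.

Section ParityGadget.
(* The gadget: a copy of Phi whose inputs i are wired either to a unary
   parity relation pinning them to the value [a i] (when [pinned i]), or to
   one of two parity relations, indexed by [P i], with targets [bP] and [bQ];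
   the single external edge also enters the relation of the class [true]. *)
Variables (I : finType) (Phi : signature I) (pinned P : pred I) (a : I -> bool)
  (bP bQ : bool).

(* Incidences: [inl i] is input i of Phi, [inr (inl i)] its partner on a
   parity vertex, [inr (inr tt)] the external edge.  Vertices: [inl tt]
   carries Phi, [inr (inl c)] the parity relation of class c, [inr (inr i)]
   the pinning relation of input i. *)
Definition gadget_inc := (I + (I + unit))%type.
Definition gadget_vtx := (unit + (bool + I))%type.

Definition gadget_vof (j : gadget_inc) : gadget_vtx :=
  match j with
  | inl _ => inl tt
  | inr (inl i) => if pinned i then inr (inr i) else inr (inl (P i))
  | inr (inr _) => inr (inl true)
  end.

Definition gadget_ext : {set gadget_inc} := [set inr (inr tt)].

Definition gadget_mate (j : gadget_inc) : gadget_inc :=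
  match j with
  | inl i => inr (inl i)
  | inr (inl i) => inl i
  | inr (inr u) => inr (inr u)
  end.

Lemma gadget_mate_out j : j \notin gadget_ext -> gadget_mate j \notin gadget_ext.
Proof. by case: j => [i|[i|[]]]; rewrite !inE. Qed.
Lemma gadget_mate_neq j : j \notin gadget_ext -> gadget_mate j != j.
Proof. by case: j => [i|[i|[]]]; rewrite !inE. Qed.
Lemma gadget_mate_inv j : j \notin gadget_ext -> gadget_mate (gadget_mate j) = j.
Proof. by case: j => [i|[i|[]]]; rewrite !inE. Qed.

Definition target (v : gadget_vtx) : bool :=
  match v with
  | inl _ => false
  | inr (inl true) => bP
  | inr (inl false) => bQ
  | inr (inr i) => pinned i && a i
  end.

Definition gadget_cons (v : gadget_vtx) : signature {j | gadget_vof j == v} :=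
  match v with
  | inl _ => fun y => Phi [ffun i => if insub (inl i : gadget_inc) is Some k then y k else false]
  | inr _ => fun y => if odd (\sum_k (y k : nat))%N == target v then 1 else 0
  end.

Definition gadget := Circuit gadget_mate_out gadget_mate_neq gadget_mate_inv gadget_cons.

(* y satisfies all parity vertices when the external edge carries s; the
   gadget computes Psi s, the sum of Phi over such y (eval_gadget). *)
Definition gadget_cond (s : bool) (y : {ffun I -> bool}) : bool :=
  [forall i, pinned i ==> (y i == a i)] &&
  (odd ((\sum_(i | ~~ pinned i && P i) (y i : nat)) + s) == bP) &&
  (odd (\sum_(i | ~~ pinned i && ~~ P i) (y i : nat)) == bQ).

Definition Psi (s : bool) : rat := \sum_(y : {ffun I -> bool} | gadget_cond s y) Phi y.

Lemma ext_edge_in : (inr (inr tt) : gadget_inc) \in gadget_ext.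
Proof. by rewrite inE. Qed.
Definition ext_edge : ext_t gadget := exist _ (inr (inr tt) : gadget_inc) ext_edge_in.

Lemma ext_edgeE (k : ext_t gadget) : k = ext_edge.
Proof. by apply: val_inj; case: k => k /=; rewrite inE => /eqP. Qed.

Definition gadget_assign (s : bool) (y : {ffun I -> bool}) : {ffun gadget_inc -> bool} :=
  [ffun j => match j with inl i | inr (inl i) => y i | inr (inr _) => s end].

Lemma cons_phi s y :
  @gadget_cons (inl tt) (restr (phi := gadget) (gadget_assign s y) (inl tt)) = Phi y.
Proof.
congr Phi; apply/ffunP => i; rewrite !ffunE.
have Hi : gadget_vof (inl i) == inl tt by [].
by rewrite (insubT (fun j => gadget_vof j == inl tt) Hi) /= !ffunE.
Qed.

Lemma cons_parity s y r :
  @gadget_cons (inr r) (restr (phi := gadget) (gadget_assign s y) (inr r)) =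
  if odd (\sum_(i | gadget_vof (inr (inl i)) == inr r) (y i : nat)
          + ((r == inl true) && s))%N == target (inr r) then 1 else 0.
Proof.
rewrite /=.
have -> : (\sum_k (restr (phi := gadget) (gadget_assign s y) (inr r) k : nat) =
           \sum_(k : {j | gadget_vof j == inr r}) (gadget_assign s y (val k) : nat))%N.
  by apply: eq_bigr => k _; rewrite ffunE.
rewrite (sum_over_sig (fun j => gadget_vof j == inr r) (fun j => gadget_assign s y j : nat)).
rewrite big_sumType /= [X in (X + _)%N]big_pred0 // add0n big_sumType /=.
congr (if odd (_ + _) == _ then _ else _); first by apply: eq_bigr => i _; rewrite ffunE.
rewrite big_mkcond (big_pred1 tt) /= ?ffunE; last by case.
by case: r => [[]|i] //=; case: s.
Qed.

Lemma prod_pinning s y :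
  \prod_(i : I) @gadget_cons (inr (inr i)) (restr (phi := gadget) (gadget_assign s y) (inr (inr i)))
  = if [forall i, pinned i ==> (y i == a i)] then 1 else 0.
Proof.
rewrite -prod_indicator; apply: eq_bigr => i _; rewrite cons_parity /= addn0.
rewrite (eq_bigl (fun i' => pinned i' && (i' == i))); last first.
  move=> i'; case: (pinned i') => /=; last by case: (P i').
  by apply/eqP/eqP => [[->]|->].
case Hp: (pinned i) => /=.
  rewrite (big_pred1 i) /=; last by move=> i' /=; case: eqP => [->|_]; rewrite ?Hp ?andbF ?andbT.
  by case: (y i); case: (a i).
by rewrite big_pred0 // => i' /=; case: eqP => [->|_]; rewrite ?Hp ?andbF.
Qed.

Lemma prod_gadget s y :
  \prod_(v : gadget_vtx) @gadget_cons v (restr (phi := gadget) (gadget_assign s y) v) =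
  if gadget_cond s y then Phi y else 0.
Proof.
rewrite big_sumType (big_pred1 tt); last by case.
rewrite cons_phi big_sumType big_bool !cons_parity prod_pinning /=.
have class_sum (c : bool) :
    (\sum_(i | (if pinned i then inr (inr i) else inr (inl (P i)))
               == inr (inl c) :> gadget_vtx) (y i : nat) =
     \sum_(i | ~~ pinned i && (if c then P i else ~~ P i)) (y i : nat))%N.
  by apply: eq_bigl => i; case: (pinned i); case: (P i); case: c.
rewrite !class_sum addn0 /gadget_cond.
by case: [forall i, _]; case: (odd _ == bP); case: (odd _ == bQ); rewrite /= ?mulr1 ?mulr0.
Qed.

(* Assignments correspond to inputs y of Phi, so the circuit computes Psi. *)
Lemma eval_gadget (x : {ffun ext_t gadget -> bool}) : eval x = Psi (x ext_edge).
Proof.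
rewrite /eval (reindex_onto (gadget_assign (x ext_edge)) (fun x' => [ffun i => x' (inl i)])).
  rewrite (eq_bigl xpredT); last first.
    move=> y; apply/andP; split; first (apply/andP; split).
    - by apply/forallP => k; rewrite (ext_edgeE k) ffunE.
    - by apply/forallP => -[i|[i|[]]] /=; rewrite ?ffunE ?inE /= ?eqxx.
    - by apply/eqP/ffunP => i; rewrite !ffunE.
  by rewrite /Psi [RHS]big_mkcond; apply: eq_bigr => y _; exact: prod_gadget.
move=> x' /andP[/forallP Hext /forallP Hmate].
apply/ffunP => -[i|[i|[]]]; rewrite !ffunE //.
- by have := Hmate (inl i); rewrite inE /= => /eqP ->.
- by have := Hext ext_edge => /eqP.
Qed.

Lemma gadget_vof_inr r : gadget_vof (inr r) == inl tt -> False.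
Proof. by case: r => [i|[]] //=; case: (pinned i). Qed.

Lemma gadget_phi_copy : is_copy Phi (@gadget_cons (inl tt)).
Proof.
pose pi (i : I) : {j | gadget_vof j == inl tt} := exist _ (inl i) (eqxx (inl tt : gadget_vtx)).
pose pinv (k : {j | gadget_vof j == inl tt}) : I :=
  match k with exist j h =>
    (match j as j0 return gadget_vof j0 == inl tt -> I with
     | inl i => fun _ => i
     | inr r => fun h => False_rect I (gadget_vof_inr h) end) h end.
exists pi; split.
  by exists pinv => // -[[i|r] Hk]; [exact: val_inj | case: (gadget_vof_inr Hk)].
move=> y /=; congr Phi; apply/ffunP => i; rewrite !ffunE.
have Hi : gadget_vof (inl i) == inl tt by [].
by rewrite (insubT (fun j => gadget_vof j == inl tt) Hi); congr (y _); exact: val_inj.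
Qed.

Lemma gadget_parity_copy r : is_parity_copy (@gadget_cons (inr r)).
Proof.
exists {j | gadget_vof j == inr r}.
have consE y : @gadget_cons (inr r) y =
    if odd (\sum_k (y k : nat))%N == target (inr r) then 1 else 0 by [].
case: (target (inr r)) consE => consE; [right|left]; exists id;
  (split=> [|y]; first by exists id);
  by rewrite consE /Even /Odd; under [in RHS]eq_bigr do rewrite ffunE; case: (odd _).
Qed.

Lemma gadget_parity_signature :
  nonzero_sig Phi -> parity_signature Phi (fun z : {ffun unit -> bool} => Psi (z tt)).
Proof.
move=> nz; split => //.
exists gadget, 1, (fun _ => ext_edge); split; first exact: ltr01.
split; first by exists (fun _ => tt); [case | move=> k; rewrite (ext_edgeE k)].
split; first by move=> x; rewrite ffunE mul1r eval_gadget.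
exists (inl tt); split; first exact: gadget_phi_copy.
by case=> [[]|r] // _; exact: gadget_parity_copy.
Qed.

End ParityGadget.

Lemma prat_gadget_bound (I : finType) (Phi : signature I) p pinned P a bP bQ :
  IsPrat Phi p -> 0 < Psi Phi pinned P a bP bQ true ->
  Psi Phi pinned P a bP bQ false <= p * Psi Phi pinned P a bP bQ true.
Proof.
move=> hp Hpos; have [y /andP[_ Hy]] := pos_sum_witness Hpos.
case: hp => [[Hz _]|[_ [_ Hmax]]]; first by rewrite Hz eqxx in Hy.
have := Hmax _ (gadget_parity_signature pinned P a bP bQ (ex_intro _ y Hy)).
by rewrite /ffb !ffunE => /(_ Hpos); rewrite ler_pdivrMr.
Qed.

Section Cube.
Variable J : finType.
Implicit Types (S : {set J}) (a w : {ffun J -> bool}).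

Definition in_face S a w : bool := [forall i, (i \in S) ==> (w i == a i)].

Definition par_out S w : bool := odd (\sum_(i | i \notin S) (w i : nat)).

Definition set_coord a j b : {ffun J -> bool} := [ffun i => if i == j then b else a i].

Lemma flipE (x : {ffun J -> bool}) i k : flip x i k = if k == i then ~~ x k else x k.
Proof. by rewrite ffunE. Qed.

Lemma flipK (x : {ffun J -> bool}) i : flip (flip x i) i = x.
Proof. by apply/ffunP => k; rewrite !flipE; case: eqP => // _; rewrite negbK. Qed.

Lemma par_out_flip S w i : i \notin S -> par_out S (flip w i) = ~~ par_out S w.
Proof.
move=> Hi; rewrite /par_out (bigD1 i) // [in RHS](bigD1 i) //= flipE eqxx.
rewrite (eq_bigr (fun k => (w k : nat))) => [|k /andP[_ /negbTE Hk]]; last by rewrite flipE Hk.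
by rewrite !oddD; case: (w i) => /=; rewrite ?negbK.
Qed.

Lemma in_face_flip S a w i : i \notin S -> in_face S a (flip w i) = in_face S a w.
Proof.
move=> Hi; apply: eq_forallb => k; rewrite flipE; case: (k =P i) => // ->.
by rewrite (negbTE Hi).
Qed.

Lemma in_face_set S a j b w : j \notin S ->
  in_face (j |: S) (set_coord a j b) w = in_face S a w && (w j == b).
Proof.
move=> Hj; apply/forallP/andP => [H|[/forallP H1 H2] k].
  split; last by have := H j; rewrite setU11 ffunE eqxx.
  apply/forallP => k; apply/implyP => Hk; have /implyP := H k.
  rewrite inE Hk orbT ffunE => /(_ isT).
  by case: (k =P j) => [Ek|_] //; rewrite -Ek Hk in Hj.
apply/implyP; rewrite !inE ffunE; case: (k =P j) => [->|_] //= Hk.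
exact: (implyP (H1 k)).
Qed.

Lemma in_face_setT a w : in_face setT a w = (w == a).
Proof.
apply/forallP/eqP => [H|->]; last by move=> k; rewrite eqxx implybT.
by apply/ffunP => k; have := H k; rewrite in_setT => /eqP.
Qed.

Lemma par_out_setT w : par_out setT w = false.
Proof. by rewrite /par_out big_pred0 // => k; rewrite in_setT. Qed.

Lemma in_face_set0 a w : in_face set0 a w.
Proof. by apply/forallP => k; rewrite inE. Qed.

End Cube.

Lemma tcons_flip_l (J : finType) t (w : {ffun J -> bool}) :
  flip (tcons t w) (inl tt) = tcons (~~ t) w.
Proof. by apply/ffunP => -[[]|k]; rewrite !ffunE. Qed.

Lemma tcons_flip_r (J : finType) t (w : {ffun J -> bool}) j :
  flip (tcons t w) (inr j) = tcons t (flip w j).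
Proof. by apply/ffunP => -[[]|k]; rewrite !ffunE. Qed.

Section FaceGadgets.
Variable J : finType.
Implicit Types (S : {set J}) (a w : {ffun J -> bool}).

Lemma sum_andF (T : finType) (Pr : pred T) (f : T -> nat) :
  (\sum_(j | Pr j && false) f j = 0)%N.
Proof. by rewrite big_pred0 // => j; rewrite andbF. Qed.

Lemma sum_unit_plus (Pr : pred (unit + J)) (f : unit + J -> nat) :
  (\sum_(k | Pr k) f k =
   (if Pr (inl tt) then f (inl tt) else 0) + \sum_(j | Pr (inr j)) f (inr j))%N.
Proof. by rewrite big_sumType big_mkcond (big_pred1 tt) //; case. Qed.

(* Gadget data on 1+J describing a face (S, a) of {0,1}^J, the first
   coordinate forming its own class. *)
Definition face_pinned S (k : unit + J) : bool := if k is inr j then j \in S else false.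
Definition first_coord (k : unit + J) : bool := if k is inl _ then true else false.
Definition face_point a (k : unit + J) : bool := if k is inr j then a j else false.

(* With these data the gadget of F sums F(s;w) over one parity class of the
   face: the class [true] ties the first coordinate to the external edge. *)
Lemma F_class_gadget (F : signature (unit + J)%type) S a b s :
  Psi F (face_pinned S) first_coord (face_point a) false b s =
  \sum_(w | in_face S a w && (par_out S w == b)) F (tcons s w).
Proof.
rewrite /Psi (reindex_onto (tcons s) (fun y => [ffun j => y (inr j)])); last first.
  move=> y /andP[/andP[_ Hfirst] _]; apply/ffunP => -[[]|j]; rewrite !ffunE //.
  move: Hfirst; rewrite sum_unit_plus /= sum_andF addn0 oddD.
  by case: (y (inl tt)); case: s.
apply: eq_bigl => w; rewrite /gadget_cond.
have -> : [forall i, face_pinned S i ==> (tcons s w i == face_point a i)] = in_face S a w.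
  apply/forallP/forallP => H i; first by have := H (inr i); rewrite /= ffunE.
  by case: i => [[]|j] //=; rewrite ffunE; apply: H.
rewrite !sum_unit_plus /= sum_andF !ffunE addn0 addnn odd_double /= andbT add0n.
have -> : [ffun j => tcons s w (inr j)] = w by apply/ffunP => j; rewrite !ffunE.
rewrite eqxx andbT; congr (_ && (odd _ == b)).
by apply: eq_big => [j|j _]; rewrite ?andbT ?ffunE.
Qed.

(* Likewise, a face of the cube with the external edge shifting the parity
   of the free coordinates is a gadget of G. *)
Lemma G_class_gadget (G : signature J) S a b s :
  Psi G (fun j => j \in S) xpredT a b false s =
  \sum_(w | in_face S a w && (par_out S w (+) s == b)) G w.
Proof.
apply: eq_bigl => w; rewrite /gadget_cond /= sum_andF andbT oddD.
rewrite oddb (eq_bigl (fun j => j \notin S)) // => j; exact: andbT.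
Qed.

End FaceGadgets.

Lemma terraced_first_swap (J : finType) (F : signature (unit + J)%type)
  (w : {ffun J -> bool}) (i : J) :
  strictly_terraced F -> F (tcons true w) = 0 ->
  F (tcons false w) = F (tcons true (flip w i)).
Proof.
by move=> F_terr Fw0; have := F_terr _ (inl tt) (inr i) Fw0;
  rewrite tcons_flip_l tcons_flip_r.
Qed.

Section Main.
Variables (J : finType) (F : signature (unit + J)%type) (G : signature J) (pF pG : rat).
Hypotheses (F_ge0 : forall x, 0 <= F x) (G_ge0 : forall x, 0 <= G x)
  (F_terr : strictly_terraced F) (G_terr : strictly_terraced G)
  (hpF : IsPrat F pF) (hpG : IsPrat G pG).
Implicit Types (S : {set J}) (a w x : {ffun J -> bool}).

Local Notation F1 w := (F (tcons true w)).
Local Notation F0 w := (F (tcons false w)).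

Definition face_sum S a (t : bool) : rat :=
  \sum_(w | in_face S a w) F (tcons t w) * G w.

Lemma face_sum_ge0 S a t : 0 <= face_sum S a t.
Proof. by apply: sumr_ge0 => w _; apply: mulr_ge0. Qed.

Lemma face_sum_split S a j t : j \notin S ->
  face_sum S a t = face_sum (j |: S) (set_coord a j true) t +
                   face_sum (j |: S) (set_coord a j false) t.
Proof.
move=> Hj; rewrite /face_sum (bigID (fun w : {ffun J -> bool} => w j)) /=.
by congr (_ + _); apply: eq_bigl => w; rewrite in_face_set //; case: (w j).
Qed.

Lemma F_class_bound S a b :
  0 < \sum_(w | in_face S a w && (par_out S w == b)) F1 w ->
  \sum_(w | in_face S a w && (par_out S w == b)) F0 w <=
    pF * \sum_(w | in_face S a w && (par_out S w == b)) F1 w.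
Proof. by rewrite -!F_class_gadget; apply: prat_gadget_bound. Qed.

Lemma G_class_bound S a b :
  0 < \sum_(w | in_face S a w && (par_out S w != b)) G w ->
  \sum_(w | in_face S a w && (par_out S w == b)) G w <=
    pG * \sum_(w | in_face S a w && (par_out S w != b)) G w.
Proof.
have class_sum s : \sum_(w | in_face S a w && (par_out S w (+) s == b)) G w =
    \sum_(w | in_face S a w && (par_out S w == b (+) s)) G w.
  by apply: eq_bigl => w; case: (par_out S w); case: s; case: b.
have := @prat_gadget_bound _ _ _ (fun j => j \in S) xpredT a b false hpG.
rewrite !G_class_gadget !class_sum addbF.
by rewrite (eq_bigl (fun w => in_face S a w && (par_out S w != b))) // => w;
  case: (par_out S w); case: b {class_sum}.
Qed.

Lemma F_point_bound w : 0 < F1 w -> F0 w <= pF * F1 w.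
Proof.
have point t : \sum_(w' | in_face setT w w' && (par_out setT w' == false)) F (tcons t w') =
               F (tcons t w).
  by rewrite (big_pred1 w) // => w'; rewrite in_face_setT par_out_setT andbT.
by have := @F_class_bound setT w false; rewrite !point.
Qed.

Lemma pG_ge0 w : 0 < G w -> 0 <= pG.
Proof.
have one : \sum_(w' | in_face setT w w' && (par_out setT w' != true)) G w' = G w.
  by rewrite (big_pred1 w) // => w'; rewrite in_face_setT par_out_setT andbT.
have none : \sum_(w' | in_face setT w w' && (par_out setT w' == true)) G w' = 0.
  by rewrite big_pred0 // => w'; rewrite par_out_setT andbF.
move=> Gw; have := @G_class_bound setT w true; rewrite one none => /(_ Gw).
by rewrite pmulr_lge0.
Qed.

Section Degenerate.
(* The degenerate case of the induction: the half C_b of the face (S, a)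
   obtained by fixing the free coordinate j to b carries no weight at t = 1
   (F1 * G vanishes on it), yet contains a point x with F0 x > 0, G x > 0. *)
Variables (S : {set J}) (a : {ffun J -> bool}) (j : J) (b : bool) (x : {ffun J -> bool}).
Hypotheses (j_free : j \notin S) (x_half : in_face (j |: S) (set_coord a j b) x)
  (F0x_gt0 : 0 < F0 x) (Gx_gt0 : 0 < G x)
  (half_null : forall w, in_face (j |: S) (set_coord a j b) w -> F1 w * G w = 0).

Local Notation in_half w := (in_face (j |: S) (set_coord a j b) w).
Local Notation same_class w := (par_out S w == par_out S x).

Lemma F1x_eq0 : F1 x = 0.
Proof.
by have /eqP := half_null x_half; rewrite mulf_eq0 (gt_eqF Gx_gt0) orbF => /eqP.
Qed.

Definition dist w : {set J} := [set i | w i != x i].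

Lemma dist_free w i : in_half w -> i \in dist w -> i \notin j |: S.
Proof.
move=> /forallP Hw; rewrite inE => Hi; apply/negP => HS.
have := Hw i; have := forallP x_half i; rewrite HS /= => /eqP Hxi /eqP Hwi.
by rewrite Hxi Hwi eqxx in Hi.
Qed.

Lemma dist_free_S w i : in_half w -> i \in dist w -> i \notin S.
Proof. by move=> Hw /(dist_free Hw); rewrite inE negb_or => /andP[]. Qed.

Lemma dist_flip w i : i \in dist w -> (#|dist (flip w i)| < #|dist w|)%N.
Proof.
move=> Hi; rewrite [X in (_ < X)%N](cardsD1 i) Hi add1n ltnS.
apply: subset_leq_card; apply/subsetP => k; rewrite !inE flipE.
case: (k =P i) => [->|_] /=; last by move=> ->.
by move: Hi; rewrite inE; case: (w i); case: (x i).
Qed.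

Lemma dist_eq0 w : dist w = set0 -> w = x.
Proof.
move=> H0; apply/ffunP => k; apply/eqP; apply: contraT => Hk.
have : k \in dist w by rewrite inE.
by rewrite H0 inE.
Qed.

Lemma step_toward_x v : in_half v -> ~~ same_class v ->
  exists i, [/\ in_half (flip v i), same_class (flip v i)
              & (#|dist (flip v i)| < #|dist v|)%N].
Proof.
move=> Hv Hp; case: (set_0Vmem (dist v)) => [/dist_eq0 Ev|[i Hi]].
  by rewrite Ev eqxx in Hp.
exists i; split; last exact: dist_flip.
- by rewrite in_face_flip // (dist_free Hv Hi).
- by rewrite par_out_flip ?(dist_free_S Hv Hi) //; move: Hp; case: (par_out S v); case: (par_out S x).
Qed.

Definition rigid w : Prop :=
  (same_class w -> [/\ F1 w = 0, G w = G x & F0 w = F0 x]) /\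
  (~~ same_class w -> G w = 0 /\ F1 w = F0 x).

Lemma rigid_x : rigid x.
Proof. by split=> [_|]; [split; rewrite ?F1x_eq0 | rewrite eqxx]. Qed.

(* By induction on the distance to x, strict terracedness of F and G
   propagates the rigid shape along the edges of the half. *)
Lemma rigid_half_bounded n w : in_half w -> (#|dist w| <= n)%N -> rigid w.
Proof.
elim: n w => [|n IH] w Hw Hn; have [/dist_eq0 ->|[i Hi]] := set_0Vmem (dist w).
- exact: rigid_x.
- by move: Hn; rewrite leqn0 => /eqP/cards0_eq E; rewrite E inE in Hi.
- exact: rigid_x.
have HiS := dist_free_S Hw Hi.
set w' := flip w i.
have Hw' : in_half w' by rewrite in_face_flip // (dist_free Hw Hi).
have Hd' : (#|dist w'| <= n)%N by rewrite -ltnS (leq_trans (dist_flip Hi) Hn).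
have class' : same_class w' = ~~ same_class w.
  by rewrite /w' par_out_flip //; case: (par_out S w); case: (par_out S x).
have ww' : flip w' i = w by rewrite flipK.
have [IH_same IH_other] := IH w' Hw' Hd'.
split=> Hp.
- have Hp' : ~~ same_class w' by rewrite class' Hp.
  have [Gw'0 F1w'] := IH_other Hp'.
  have [i' [Hu Hu_same Hu_closer]] := step_toward_x Hw' Hp'.
  have [_ Gu _] := (IH _ Hu (leq_trans (ltnW Hu_closer) Hd')).1 Hu_same.
  have Gw : G w = G x by rewrite -Gu -ww'; apply: G_terr.
  have F1w : F1 w = 0.
    by have /eqP := half_null Hw; rewrite mulf_eq0 Gw (gt_eqF Gx_gt0) orbF => /eqP.
  by split=> //; rewrite (terraced_first_swap i F_terr F1w) -/w' F1w'.
- have [F1w'0 _ F0w'] := IH_same (etrans class' Hp).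
  have F1w : F1 w = F0 x by rewrite -ww' -(terraced_first_swap i F_terr F1w'0).
  split=> //.
  by have /eqP := half_null Hw; rewrite mulf_eq0 F1w (gt_eqF F0x_gt0) /= => /eqP.
Qed.

Lemma rigid_half w : in_half w -> rigid w.
Proof. by move=> Hw; apply: (rigid_half_bounded (n := #|dist w|)). Qed.

Lemma flip_into_half w : in_face S a w -> w j != b ->
  in_half (flip w j) /\ par_out S (flip w j) = ~~ par_out S w.
Proof.
move=> Hw Hwj; rewrite in_face_set // in_face_flip // Hw flipE eqxx par_out_flip //.
by split=> //; move: Hwj; case: (w j); case: b.
Qed.

Lemma face_same_G w : in_face S a w -> same_class w -> G w = G x.
Proof.
move=> Hw Hp; case Hwj: (w j == b).
  by case: ((rigid_half (w := w) _).1 Hp); rewrite ?in_face_set ?Hw ?Hwj.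
have [Hw' class'] := flip_into_half Hw (negbT Hwj).
have Hp' : ~~ same_class (flip w j) by rewrite class' (eqP Hp); case: (par_out S x).
have [Gw'0 _] := (rigid_half Hw').2 Hp'.
have [i' [Hu Hu_same _]] := step_toward_x Hw' Hp'.
have [_ Gu _] := (rigid_half Hu).1 Hu_same.
by rewrite -Gu -{1}(flipK w j); apply: G_terr.
Qed.

Lemma face_other_F1 w : in_face S a w -> ~~ same_class w -> F1 w = F0 x.
Proof.
move=> Hw Hp; case Hwj: (w j == b).
  by case: ((rigid_half (w := w) _).2 Hp); rewrite ?in_face_set ?Hw ?Hwj.
have [Hw' class'] := flip_into_half Hw (negbT Hwj).
have Hp' : same_class (flip w j) by move: Hp; rewrite class'; case: (par_out S w); case: (par_out S x).
have [F1w'0 _ F0w'] := (rigid_half Hw').1 Hp'.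
by rewrite -F0w' (terraced_first_swap j F_terr F1w'0) flipK.
Qed.

Lemma face_same_F0 w : in_face S a w -> same_class w -> F1 w = 0 -> F0 w = F0 x.
Proof.
move=> Hw Hp F1w0; rewrite (terraced_first_swap j F_terr F1w0).
apply: face_other_F1; first by rewrite in_face_flip.
by rewrite par_out_flip // (eqP Hp); case: (par_out S x).
Qed.

Local Notation same_pts w := (in_face S a w && same_class w).
Local Notation other_pts w := (in_face S a w && ~~ same_class w).

(* Since G is constant on the class of x, the face sum separates. *)
Lemma face_sum_classes t : face_sum S a t =
  (\sum_(w | same_pts w) F (tcons t w)) * G x + \sum_(w | other_pts w) F (tcons t w) * G w.
Proof.
rewrite /face_sum (bigID (fun w => same_class w)) /= big_distrl.
by congr (_ + _); apply: eq_bigr => w /andP[Hw Hp]; rewrite face_same_G.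
Qed.

Lemma other_F1_sum :
  \sum_(w | other_pts w) F1 w * G w = F0 x * \sum_(w | other_pts w) G w.
Proof.
by rewrite mulr_sumr; apply: eq_bigr => w /andP[Hw Hp]; rewrite face_other_F1.
Qed.

(* On the other class F1 = F0 x > 0, so the pointwise bound applies. *)
Lemma other_F0_bound :
  \sum_(w | other_pts w) F0 w * G w <= pF * \sum_(w | other_pts w) F1 w * G w.
Proof.
rewrite mulr_sumr; apply: ler_sum => w /andP[Hw Hp].
rewrite mulrA ler_wpM2r ?G_ge0 //; apply: F_point_bound.
by rewrite face_other_F1.
Qed.

Lemma same_F0_sum : \sum_(w | same_pts w) F1 w = 0 ->
  (\sum_(w | same_pts w) F0 w) * G x = F0 x * \sum_(w | same_pts w) G w.
Proof.
move=> F1sum0; rewrite mulr_sumr big_distrl; apply: eq_bigr => w /andP[Hw Hp] /=.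
rewrite (face_same_G Hw Hp) (face_same_F0 Hw Hp) //.
by apply: (psumr_eq0P _ F1sum0) => [w' _|]; rewrite ?F_ge0 ?Hw ?Hp.
Qed.

(* The inequality on a degenerate face: if F1 has weight on the class of x
   the F-gadget bound applies there, otherwise F0 = F0 x on that class and
   the G-gadget bound compares the two classes. *)
Lemma degenerate_bound :
  0 < face_sum S a true -> face_sum S a false <= (pF + pG) * face_sum S a true.
Proof.
have pG_nneg : 0 <= pG := pG_ge0 Gx_gt0.
move=> H1_gt0; have H1_ge0 := ltW H1_gt0; move: H1_gt0 H1_ge0.
rewrite !face_sum_classes other_F1_sum.
set A1 := \sum_(w | same_pts w) F1 w; set A0 := \sum_(w | same_pts w) F0 w.
set SG := \sum_(w | same_pts w) G w; set SG' := \sum_(w | other_pts w) G w.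
have other_bound := other_F0_bound; rewrite other_F1_sum -/SG' in other_bound.
have A1_ge0 : 0 <= A1 by apply: sumr_ge0.
have [A1_gt0|A1_le0] := ltrP 0 A1.
  move=> _ H1_ge0; have same_bound : A0 * G x <= pF * A1 * G x.
    by rewrite ler_wpM2r ?(ltW Gx_gt0) //; exact: (@F_class_bound S a (par_out S x) A1_gt0).
  apply: (le_trans (lerD same_bound other_bound)).
  by rewrite -mulrA -mulrDr mulrDl lerDl mulr_ge0.
have A1_eq0 : A1 = 0 by apply/eqP; rewrite eq_le A1_le0 A1_ge0.
rewrite same_F0_sum // A1_eq0 mul0r add0r => H1_gt0 _.
have SG'_gt0 : 0 < SG' by rewrite -(pmulr_rgt0 _ F0x_gt0).
have G_bound : F0 x * SG <= F0 x * (pG * SG').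
  by rewrite ler_wpM2l ?(ltW F0x_gt0) //; exact: (@G_class_bound S a (par_out S x) SG'_gt0).
apply: (le_trans (lerD G_bound other_bound)).
by rewrite le_eqVlt; apply/orP; left; apply/eqP; ring.
Qed.

End Degenerate.

Definition face_claim S a : Prop :=
  0 < face_sum S a true -> face_sum S a false <= (pF + pG) * face_sum S a true.

Lemma degenerate_half_claim S a j b : j \notin S ->
  face_sum (j |: S) (set_coord a j b) true = 0 ->
  0 < face_sum (j |: S) (set_coord a j b) false -> face_claim S a.
Proof.
move=> Hj H1 H0; have [x /andP[Hx]] := pos_sum_witness H0.
rewrite mulf_eq0 negb_or => /andP[F0x Gx].
have half_null w : in_face (j |: S) (set_coord a j b) w -> F1 w * G w = 0.
  by move=> Hw; apply: (psumr_eq0P _ H1) => // w' _; apply: mulr_ge0.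
by apply: (degenerate_bound Hj Hx _ _ half_null); rewrite lt0r ?F0x ?Gx ?F_ge0 ?G_ge0.
Qed.

Lemma point_claim a : face_claim setT a.
Proof.
have E t : face_sum setT a t = F (tcons t a) * G a.
  by rewrite /face_sum (big_pred1 a) // => w; rewrite in_face_setT.
rewrite /face_claim !E => H1.
have Ga_gt0 : 0 < G a.
  by rewrite lt0r G_ge0 andbT; apply: contraTneq H1 => ->; rewrite mulr0 ltxx.
have F1a_gt0 : 0 < F1 a.
  by rewrite lt0r F_ge0 andbT; apply: contraTneq H1 => ->; rewrite mul0r ltxx.
apply: (le_trans (ler_wpM2r (G_ge0 a) (F_point_bound F1a_gt0))).
by rewrite -mulrA ler_wpM2r ?mulr_ge0 // lerDl (pG_ge0 Ga_gt0).
Qed.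

Lemma split_claim S a j : j \notin S ->
  face_claim (j |: S) (set_coord a j true) ->
  face_claim (j |: S) (set_coord a j false) -> face_claim S a.
Proof.
move=> Hj IH1 IH0 H_gt0.
have half_zero b : face_sum (j |: S) (set_coord a j b) true = 0 ->
    face_sum S a false <= (pF + pG) * face_sum S a true.
  move=> Hb; have [Hb0|Hb0] := ltrP 0 (face_sum (j |: S) (set_coord a j b) false).
    exact: degenerate_half_claim Hj Hb Hb0 H_gt0.
  have Hb0' : face_sum (j |: S) (set_coord a j b) false = 0.
    by apply/eqP; rewrite eq_le Hb0 face_sum_ge0.
  have other t : face_sum S a t = face_sum (j |: S) (set_coord a j (~~ b)) t +
                                  face_sum (j |: S) (set_coord a j b) t.
    by rewrite (face_sum_split a t Hj); case: b {Hb Hb0 Hb0'} => //; rewrite addrC.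
  move: H_gt0; rewrite !other Hb Hb0' !addr0.
  by case: b {Hb Hb0 Hb0' other}; [apply: IH0 | apply: IH1].
have [P1|P1] := ltrP 0 (face_sum (j |: S) (set_coord a j true) true); last first.
  by apply: (half_zero true); apply/eqP; rewrite eq_le P1 face_sum_ge0.
have [P0|P0] := ltrP 0 (face_sum (j |: S) (set_coord a j false) true); last first.
  by apply: (half_zero false); apply/eqP; rewrite eq_le P0 face_sum_ge0.
by rewrite !(face_sum_split a _ Hj) mulrDr; apply: lerD; [apply: IH1 | apply: IH0].
Qed.

Lemma face_claim_all n S a : #|~: S| = n -> face_claim S a.
Proof.
elim: n S a => [|n IH] S a Hn.
  by rewrite -[S]setCK (cards0_eq Hn) setC0; apply: point_claim.
have [/eqP|[j Hj]] := set_0Vmem (~: S); first by rewrite -cards_eq0 Hn.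
have HjS : j \notin S by rewrite inE in Hj.
have Hn' : #|~: (j |: S)| = n.
  have -> : ~: (j |: S) = (~: S) :\ j by apply/setP => k; rewrite !inE negb_or andbC.
  by move: Hn; rewrite (cardsD1 j) Hj add1n => -[].
by apply: split_claim HjS (IH _ _ Hn') (IH _ _ Hn').
Qed.

End Main.

Theorem lemma15 (J : finType) (F : signature (unit + J)%type) (G : signature J)
  (pF pG : rat)
  (F_ge0 : forall x, 0 <= F x) (G_ge0 : forall x, 0 <= G x)
  (F_terr : strictly_terraced F) (G_terr : strictly_terraced G)
  (hpF : IsPrat F pF) (hpG : IsPrat G pG) :
  let H := fun t : bool => \sum_(x : {ffun J -> bool}) F (tcons t x) * G x in
  0 < H true -> H false <= (pF + pG) * H true.
Proof.
move=> H; pose origin : {ffun J -> bool} := [ffun _ => false].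
have whole_cube t : H t = face_sum F G set0 origin t.
  by apply: eq_bigl => w; rewrite in_face_set0.
rewrite !whole_cube.
exact: (face_claim_all F_ge0 G_ge0 F_terr G_terr hpF hpG (erefl _)).
Qed.
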